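(* Assume the standing setting described in the context. Let $(N_{1,n},V_{1,n})$ and $(N_{2,n},V_{2,n})$ be deterministic sequences of norms and polar angles, let $W_{1,n}:=V_{1,n}$, $W_{2,n}:=\pi-V_{2,n}$, and suppose $(N_{i,n},W_{i,n})\to\mathrm{Pole}_i$ for $i\in\{1,2\}$. Then, with $p(r,\varphi):=r(\cos\varphi,\sin\varphi)$ and $F_n:=W_{1,n}+W_{2,n}$, $$\big|p(N_{1,n},V_{1,n})-p(N_{2,n},V_{2,n})\big|=N_{1,n}+N_{2,n}-\frac a4F_n^2+\widetilde R_n,$$ where $\widetilde R_n=O(F_n^4)+A_n+B_n+C_n+D_n$ with $A_n=\frac14\big(\frac12F_n^2+O(F_n^4)\big)(a-N_{1,n})$, $B_n=\frac14\big(\frac12F_n^2+O(F_n^4)\big)(a-N_{2,n})$, $C_n=-\frac{a}{16}\big(\frac12F_n^2+O(F_n^4)\big)^2$, $D_n=O\Big((a-N_{1,n})^2+(a-N_{2,n})^2+\big(\frac12F_n^2+O(F_n^4)\big)^2\Big)$, as $n\to\infty$.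
   Context: Standing setting: $E\subset\mathbb{R}^2$ is compact, $a>0$, $\mathrm{diam}(E)=2a$, $\inf\{x:(x,y)\in E\}=-a$, $\sup\{x:(x,y)\in E\}=a$, and $E$ is the support of a Lebesgue density $f$ satisfying the paper's regularity assumptions near $(\pm a,0)$. $Q_1,\dots,Q_4$ are the open quadrants, $Q_1=\{x>0,y>0\}$, numbered anticlockwise, and $E_i:=E\cap Q_i$. Polar angles take values in $[0,2\pi)$. For $i\in\{1,2,3,4\}$, given sequences $N_{i,n}$ (norm) and $V_{i,n}$ (polar angle), set $W_{1,n}=V_{1,n}$, $W_{2,n}=\pi-V_{2,n}$, $W_{3,n}=V_{3,n}-\pi$, $W_{4,n}=2\pi-V_{4,n}$; one writes $(N_{i,n},W_{i,n})\to\mathrm{Pole}_i$ if $N_{i,n}\ge0$, $W_{i,n}\ge0$ for every $n$, the point $p(N_{i,n},V_{i,n})$ lies in $E_i$, and these points converge to $(a,0)$ if $i\in\{1,4\}$, resp. to $(-a,0)$ if $i\in\{2,3\}$. *)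

From HB Require Import structures.
From mathcomp Require Import all_boot all_order all_algebra.
From mathcomp Require Import all_classical all_reals all_analysis.
Set Implicit Arguments. Unset Strict Implicit. Unset Printing Implicit Defensive.
Import Order.TTheory GRing.Theory Num.Theory.
Import numFieldNormedType.Exports.
Local Open Scope classical_set_scope.
Local Open Scope ring_scope.

(* Euclidean distance on R^2 (note: the canonical norm on R*R in
   MathComp-Analysis is the max norm, so we write the Euclidean one out). *)
Definition eucl_dist {R : realType} (u v : R * R) : R :=
  Num.sqrt ((u.1 - v.1) ^+ 2 + (u.2 - v.2) ^+ 2).

Definition pp {R : realType} (r phi : R) : R * R := (r * cos phi, r * sin phi).

Definition diam {R : realType} (E : set (R * R)) : R :=
  sup [set d | exists u v, E u /\ E v /\ d = eucl_dist u v].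

Definition Quadrant {R : realType} (i : nat) : set (R * R) :=
  match i with
  | 1%N => [set u | 0 < u.1 /\ 0 < u.2]
  | 2%N => [set u | u.1 < 0 /\ 0 < u.2]
  | 3%N => [set u | u.1 < 0 /\ u.2 < 0]
  | _ => [set u | 0 < u.1 /\ u.2 < 0]
  end.

Definition Wof {R : realType} (i : nat) (v : R) : R :=
  match i with
  | 1%N => v
  | 2%N => pi - v
  | 3%N => v - pi
  | _ => 2 * pi - v
  end.

Definition pole_pt {R : realType} (i : nat) (a : R) : R * R :=
  match i with
  | 2%N | 3%N => (- a, 0)
  | _ => (a, 0)
  end.

Definition to_pole {R : realType} (E : set (R * R)) (a : R) (i : nat)
    (N V : nat -> R) : Prop :=
  (forall n, 0 <= N n /\ 0 <= Wof i (V n)) /\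
  (forall n, (E `&` Quadrant i) (pp (N n) (V n))) /\
  ((fun n => pp (N n) (V n)) @ \oo --> pole_pt i a).

From HB Require Import structures.
From mathcomp Require Import all_boot all_order all_algebra.
From mathcomp Require Import all_classical all_reals all_analysis.
From mathcomp Require Import ring lra.
Import Order.TTheory GRing.Theory Num.Theory.
Import numFieldNormedType.Exports.
Local Open Scope classical_set_scope.
Local Open Scope ring_scope.

(* The two points make the angle [pi - F] at the origin, so the squared distance
   is [(N1 + N2)^2 - 2 N1 N2 (1 - cos F)].  Writing it as [S^2 (1 - u)] with
   [S = N1 + N2], one has [sqrt (1 - u) = 1 - u/2 + O(u^2)] and
   [1 - cos F = F^2/2 + O(F^4)] (Taylor bounds obtained by integrating
   [sin y <= y] three times); expanding around [N1 = N2 = a], every error term is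
   at most a constant times [(a - N1)^2 + (a - N2)^2 + F^4/4] as soon as [N1] and
   [N2] lie within [a/4] of [a], which eventually holds since both tend to [a].
   The [O(F^4)] corrections inside [A_n, ..., D_n] can therefore all be taken to
   be [0], the whole error being absorbed by the remainder [h]. *)

Section TaylorBounds.
Context {R : realType}.

Lemma ge0_derive_le_at0 (f df : R -> R) :
  (forall x : R, is_derive x (1 : R) f (df x)) -> (forall x, 0 < x -> 0 <= df x) ->
  forall x, 0 <= x -> f 0 <= f x.
Proof.
move=> f_df df_ge0 x x_ge0.
apply: (@ger0_derive1_ndecry R f 0 _ _ _ 0 x (lexx _) x_ge0).
- by move=> y _; case: (f_df y).
- move=> y; rewrite in_itv /= andbT => y_gt0.
  by rewrite derive1E; case: (f_df y) => _ ->; apply: df_ge0.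
- apply: continuous_subspaceT => y.
  by apply/differentiable_continuous/derivable1_diffP; case: (f_df y).
Qed.

Lemma sin_le_id (x : R) : 0 <= x -> sin x <= x.
Proof.
move=> x_ge0.
have := @ge0_derive_le_at0 (id - sin) (fun y => 1 - cos y) _ _ x x_ge0.
rewrite !fctE /= sin0 subr0 subr_ge0; apply => y _.
by rewrite subr_ge0 cos_le1.
Qed.

Lemma onem_cos_le (x : R) : 0 <= x -> 1 - cos x <= x ^+ 2 / 2.
Proof.
move=> x_ge0.
have f_df y : is_derive y (1 : R) (2^-1 *: id ^+ 2 + cos : R -> R) (y - sin y).
  apply: is_derive_eq.
  by rewrite expr1 scalerA [_ *: 1]mulr1 mulrA mulVf ?mul1r ?pnatr_eq0.
have := @ge0_derive_le_at0 _ _ f_df _ x x_ge0.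
rewrite !fctE /= cos0 expr0n /= scaler0 add0r => le_at0.
suff : 1 <= 2^-1 * x ^+ 2 + cos x by lra.
by apply: le_at0 => y y_gt0; rewrite subr_ge0 sin_le_id // ltW.
Qed.

Lemma sin_ge_cubic (x : R) : 0 <= x -> x - x ^+ 3 / 6 <= sin x.
Proof.
move=> x_ge0.
have f_df y : is_derive y (1 : R) (sin - id + 6^-1 *: id ^+ 3 : R -> R)
    (cos y - 1 + y ^+ 2 / 2).
  apply: is_derive_eq (is_deriveD (is_deriveB (is_derive_sin y) (is_derive_id y 1))
    (is_deriveZ (6^-1) (is_deriveX 3 (is_derive_id y 1)))) _.
  by rewrite /GRing.scale /=; field.
have := @ge0_derive_le_at0 _ _ f_df _ x x_ge0.
rewrite !fctE /= sin0 expr0n /= scaler0 => le_at0.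
suff : 0 - 0 + 0 <= sin x - x + 6^-1 * x ^+ 3 by lra.
by apply: le_at0 => y y_gt0; have := @onem_cos_le y (ltW y_gt0); lra.
Qed.

Lemma onem_cos_ge (x : R) : 0 <= x -> x ^+ 2 / 2 - x ^+ 4 / 24 <= 1 - cos x.
Proof.
move=> x_ge0.
have f_df y : is_derive y (1 : R)
    (24^-1 *: id ^+ 4 - 2^-1 *: id ^+ 2 - cos : R -> R) (sin y - y + y ^+ 3 / 6).
  by apply: is_derive_eq; rewrite /GRing.scale /=; field.
have := @ge0_derive_le_at0 _ _ f_df _ x x_ge0.
rewrite !fctE /= cos0 !expr0n /= !scaler0 => le_at0.
suff : 0 - 0 - 1 <= 24^-1 * x ^+ 4 - 2^-1 * x ^+ 2 - cos x by lra.
by apply: le_at0 => y y_gt0; have := @sin_ge_cubic y (ltW y_gt0); lra.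
Qed.

End TaylorBounds.

Lemma le_of_sqr_le {R : realDomainType} (x y : R) : 0 <= y -> x ^+ 2 <= y ^+ 2 -> x <= y.
Proof. by move=> y_ge0 le_sqr; nra. Qed.

Lemma sqrt_onem_approx {R : realFieldType} (S u D : R) : 0 < S -> 0 <= u -> 0 <= D ->
  D ^+ 2 = S ^+ 2 * (1 - u) -> `|D - S * (1 - u / 2)| <= S * (u ^+ 2 / 2).
Proof.
move=> S_gt0 u_ge0 D_ge0 DE.
have u_le1 : u <= 1.
  have : 0 <= S ^+ 2 * (1 - u) by rewrite -DE sqr_ge0.
  by rewrite pmulr_rge0 ?exprn_gt0 // subr_ge0.
rewrite ler_norml; apply/andP; split; last first.
  have : D <= S * (1 - u / 2) by apply: le_of_sqr_le; nra.
  have : 0 <= S * (u ^+ 2 / 2) by nra.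
  lra.
suff : S * ((1 - u) * (1 + u / 2)) <= D by nra.
case: (lerP (S * ((1 - u) * (1 + u / 2))) 0) => [|pos]; first by lra.
apply: le_of_sqr_le => //; rewrite DE.
have -> : (S * ((1 - u) * (1 + u / 2))) ^+ 2
  = S ^+ 2 * (1 - u) * ((1 - u) * (1 + u / 2) ^+ 2) by ring.
by apply: ler_piMr; nra.
Qed.

Section RadiiNearA.
Context {R : realFieldType} (a N1 N2 : R).

Lemma sum_radii_bounds : `|a - N1| <= a / 4 -> `|a - N2| <= a / 4 ->
  3 * a / 2 <= N1 + N2 <= 5 * a / 2.
Proof. by move=> /ler_normlP[? ?] /ler_normlP[? ?]; lra. Qed.

Lemma diff_radii_term (x : R) : 0 < a -> `|a - N1| <= a / 4 -> `|a - N2| <= a / 4 ->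
  0 <= x -> x * (N1 - N2) ^+ 2 / (8 * (N1 + N2))
            <= (x ^+ 2 + 2 * ((a - N1) ^+ 2 + (a - N2) ^+ 2)) / 48.
Proof.
move=> a_gt0 N1_near N2_near x_ge0.
have /andP[S_ge S_le] := sum_radii_bounds N1_near N2_near.
have d_le : `|N1 - N2| <= a / 2.
  by move: N1_near N2_near => /ler_normlP[? ?] /ler_normlP[? ?];
     rewrite ler_norml; apply/andP; split; lra.
have d_sqr : (N1 - N2) ^+ 2 <= 2 * ((a - N1) ^+ 2 + (a - N2) ^+ 2).
  by have := sqr_ge0 (2 * a - N1 - N2); nra.
have cubic : x * (N1 - N2) ^+ 2 <= a / 4 * (x ^+ 2 + (N1 - N2) ^+ 2).
  move: d_le; rewrite -(real_normK (num_real (N1 - N2))).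
  set t := `|N1 - N2| => t_le.
  have t_ge0 : 0 <= t := normr_ge0 _.
  have : 0 <= (a / 2 - t) * (x * t) by apply: mulr_ge0; [lra | exact: mulr_ge0].
  by have := mulr_ge0 (ltW a_gt0) (sqr_ge0 (x - t)); nra.
rewrite ler_pdivrMr; last by lra.
apply: (le_trans cubic).
have e_ge0 : 0 <= x ^+ 2 + 2 * ((a - N1) ^+ 2 + (a - N2) ^+ 2).
  by rewrite addr_ge0 ?mulr_ge0 ?addr_ge0 ?sqr_ge0.
have : 0 <= (x ^+ 2 + 2 * ((a - N1) ^+ 2 + (a - N2) ^+ 2)) * (8 * (N1 + N2) - 12 * a).
  by apply: mulr_ge0 => //; lra.
nra.
Qed.

Lemma prod_div_sum_radii : 0 < a -> `|a - N1| <= a / 4 -> `|a - N2| <= a / 4 ->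
  N1 * N2 / (N1 + N2) <= 5 * a / 8.
Proof.
move=> a_gt0 N1_near N2_near.
have /andP[S_ge S_le] := sum_radii_bounds N1_near N2_near.
rewrite ler_pdivrMr; last by lra.
have := sqr_ge0 (N1 - N2); nra.
Qed.

Lemma dist_expansion_error (c x D : R) :
  0 < a -> `|a - N1| <= a / 4 -> `|a - N2| <= a / 4 ->
  0 <= x -> 0 <= c -> x / 2 - x ^+ 2 / 24 <= c -> c <= x / 2 ->
  0 <= D -> D ^+ 2 = (N1 + N2) ^+ 2 - 2 * (N1 * N2) * c ->
  `|D - (N1 + N2 - a / 4 * x + x / 8 * (a - N1) + x / 8 * (a - N2) - a / 64 * x ^+ 2)|
  <= (1 + a) * ((a - N1) ^+ 2 + (a - N2) ^+ 2 + (x / 2) ^+ 2).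
Proof.
move=> a_gt0 N1_near N2_near x_ge0 c_ge0 c_ge c_le D_ge0 DE.
have /andP[S_ge S_le] := sum_radii_bounds N1_near N2_near.
have S_gt0 : 0 < N1 + N2 by lra.
have P_ge0 : 0 <= N1 * N2.
  by move: N1_near N2_near => /ler_normlP[? ?] /ler_normlP[? ?]; nra.
have P_le : 4 * (N1 * N2) <= (N1 + N2) ^+ 2 by have := sqr_ge0 (N1 - N2); nra.
pose u := 2 * (N1 * N2) * c / (N1 + N2) ^+ 2.
have u_ge0 : 0 <= u.
  by rewrite /u divr_ge0 ?sqr_ge0 // mulr_ge0 // mulr_ge0.
have u_le : u <= x / 4.
  by rewrite /u ler_pdivrMr ?exprn_gt0 //; nra.
have DEu : D ^+ 2 = (N1 + N2) ^+ 2 * (1 - u).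
  by rewrite DE /u; field; rewrite lt0r_neq0.
have sqrt_err : `|D - (N1 + N2) * (1 - u / 2)| <= 5 * a / 2 * (x ^+ 2 / 32).
  apply: (le_trans (sqrt_onem_approx _ _ _ S_gt0 u_ge0 D_ge0 DEu)).
  by apply: ler_pM; nra.
(* [D] is [S sqrt (1 - u)] with [S = N1 + N2]; its first-order part [S (1 - u / 2)]
   differs from the expansion by three terms of second order. *)
have decomp : (N1 + N2) * (1 - u / 2)
    - (N1 + N2 - a / 4 * x + x / 8 * (a - N1) + x / 8 * (a - N2) - a / 64 * x ^+ 2)
  = x * (N1 - N2) ^+ 2 / (8 * (N1 + N2)) + a * x ^+ 2 / 64
    - N1 * N2 / (N1 + N2) * (c - x / 2).
  by rewrite /u; field; rewrite lt0r_neq0.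
have d_term := diff_radii_term x a_gt0 N1_near N2_near x_ge0.
have d_term_ge0 : 0 <= x * (N1 - N2) ^+ 2 / (8 * (N1 + N2)).
  by apply: divr_ge0; [exact: mulr_ge0 (sqr_ge0 _) | lra].
have p_term : `|N1 * N2 / (N1 + N2) * (c - x / 2)| <= 5 * a / 8 * (x ^+ 2 / 24).
  rewrite normrM ger0_norm ?divr_ge0 //; last by lra.
  apply: ler_pM; rewrite ?normr_ge0 ?divr_ge0 //; last by rewrite ler_norml; lra.
  - exact: ltW.
  - exact: prod_div_sum_radii.
have ax2_ge0 : 0 <= a * x ^+ 2 by rewrite mulr_ge0 ?sqr_ge0 // ltW.
have aE_ge0 : 0 <= a * ((a - N1) ^+ 2 + (a - N2) ^+ 2).
  by rewrite mulr_ge0 ?addr_ge0 ?sqr_ge0 // ltW.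
have rest : `|x * (N1 - N2) ^+ 2 / (8 * (N1 + N2)) + a * x ^+ 2 / 64
                - N1 * N2 / (N1 + N2) * (c - x / 2)|
    <= x * (N1 - N2) ^+ 2 / (8 * (N1 + N2)) + a * x ^+ 2 / 64
       + 5 * a / 8 * (x ^+ 2 / 24).
  apply: (le_trans (ler_normB _ _)); apply: lerD => //.
  by rewrite ger0_norm // addr_ge0 // divr_ge0.
rewrite -[D](subrK ((N1 + N2) * (1 - u / 2))) -addrA decomp.
apply: (le_trans (ler_normD _ _)).
have := sqr_ge0 (a - N1); have := sqr_ge0 (a - N2).
nra.
Qed.

End RadiiNearA.

Section PolarCoordinates.
Context {R : realType}.

Lemma eucl_dist_pp_sqr (r1 r2 t1 t2 : R) :
  eucl_dist (pp r1 t1) (pp r2 t2) ^+ 2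
  = (r1 + r2) ^+ 2 - 2 * (r1 * r2) * (1 - cos (t1 + (pi - t2))).
Proof.
rewrite /eucl_dist sqr_sqrtr ?addr_ge0 ?sqr_ge0 //= addrCA addrC cosDpi cosB.
have c1 := cos2Dsin2 t1; have c2 := cos2Dsin2 t2.
transitivity (r1 ^+ 2 * (cos t1 ^+ 2 + sin t1 ^+ 2) + r2 ^+ 2 * (cos t2 ^+ 2 + sin t2 ^+ 2)
  - 2 * (r1 * r2) * (cos t1 * cos t2 + sin t1 * sin t2)); first by ring.
by rewrite c1 c2; ring.
Qed.

Lemma eucl_dist_pp0 (r t : R) : 0 <= r -> eucl_dist (pp r t) (0, 0) = r.
Proof.
move=> r0; rewrite /eucl_dist /= !subr0 !exprMn -mulrDr cos2Dsin2 mulr1.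
by rewrite sqrtr_sqr ger0_norm.
Qed.

Lemma cvg_pp_norm {N V : nat -> R} {b : R} : (forall n, 0 <= N n) ->
  (fun n => pp (N n) (V n)) @ \oo --> (b, 0) -> N @ \oo --> `|b|.
Proof.
move=> N0 cvg_pp.
have cvg_x : (fun n => N n * cos (V n)) @ \oo --> b.
  exact: (cvg_comp _ _ cvg_pp cvg_fst).
have cvg_y : (fun n => N n * sin (V n)) @ \oo --> 0.
  exact: (cvg_comp _ _ cvg_pp cvg_snd).
have -> : N = fun n => eucl_dist (pp (N n) (V n)) (0, 0).
  by apply/funext => n; rewrite eucl_dist_pp0.
have -> : `|b| = Num.sqrt ((b - 0) ^+ 2 + (0 - 0) ^+ 2).
  by rewrite !subr0 expr0n addr0 sqrtr_sqr.
apply: continuous_cvg; first exact: sqrt_continuous.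
rewrite /eucl_dist /= !expr2.
by apply: cvgD; apply: cvgM; apply: cvgB => //; apply: cvg_cst.
Qed.

Lemma radius_near_pole {N V : nat -> R} {a b : R} : 0 < a -> `|b| = a ->
  (forall n, 0 <= N n) -> (fun n => pp (N n) (V n)) @ \oo --> (b, 0) ->
  \forall n \near \oo, `|a - N n| <= a / 4.
Proof.
move=> a_gt0 b_norm N_ge0 /(cvg_pp_norm N_ge0); rewrite b_norm => cvg_N.
by apply: (cvgr_dist_le _ _ cvg_N); rewrite divr_gt0.
Qed.

Lemma pp_dist_expansion_error (a r1 r2 t1 t2 : R) :
  0 < a -> `|a - r1| <= a / 4 -> `|a - r2| <= a / 4 ->
  let F := t1 + (pi - t2) in 0 <= F ->
  `|eucl_dist (pp r1 t1) (pp r2 t2)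
    - (r1 + r2 - a / 4 * F ^+ 2 + F ^+ 2 / 8 * (a - r1) + F ^+ 2 / 8 * (a - r2)
       - a / 64 * (F ^+ 2) ^+ 2)|
  <= (1 + a) * ((a - r1) ^+ 2 + (a - r2) ^+ 2 + (F ^+ 2 / 2) ^+ 2).
Proof.
move=> a_gt0 r1_near r2_near F F_ge0.
apply: (@dist_expansion_error _ a r1 r2 (1 - cos F)) => //.
- exact: sqr_ge0.
- by rewrite -exprM; exact: onem_cos_ge.
- exact: onem_cos_le.
- exact: sqrtr_ge0.
- exact: eucl_dist_pp_sqr.
Qed.

End PolarCoordinates.

Theorem lemma4 (R : realType) (E : set (R * R)) (a : R)
  (N1 V1 N2 V2 : nat -> R) :
  compact E -> 0 < a -> diam E = 2 * a ->
  inf [set x | exists y, E (x, y)] = - a ->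
  sup [set x | exists y, E (x, y)] = a ->
  (forall n, 0 <= V1 n < 2 * pi) -> (forall n, 0 <= V2 n < 2 * pi) ->
  to_pole E a 1 N1 V1 -> to_pole E a 2 N2 V2 ->
  let F := fun n => Wof 1 (V1 n) + Wof 2 (V2 n) in
  exists (g0 g1 g2 g3 g4 : nat -> R) (h : nat -> R),
    [/\ g0 =O_\oo (fun n => F n ^+ 4) /\ g1 =O_\oo (fun n => F n ^+ 4),
        g2 =O_\oo (fun n => F n ^+ 4) /\ g3 =O_\oo (fun n => F n ^+ 4),
        g4 =O_\oo (fun n => F n ^+ 4),
        h =O_\oo (fun n => (a - N1 n) ^+ 2 + (a - N2 n) ^+ 2
                           + (2^-1 * F n ^+ 2 + g4 n) ^+ 2) &
        forall n,
          eucl_dist (pp (N1 n) (V1 n)) (pp (N2 n) (V2 n))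
          = N1 n + N2 n - a / 4 * F n ^+ 2
            + (g0 n
               + 4^-1 * (2^-1 * F n ^+ 2 + g1 n) * (a - N1 n)
               + 4^-1 * (2^-1 * F n ^+ 2 + g2 n) * (a - N2 n)
               - a / 16 * (2^-1 * F n ^+ 2 + g3 n) ^+ 2
               + h n)].
Proof.
move=> _ a_gt0 _ _ _ _ _ [pole1_ge0 [_ cvg_pole1]] [pole2_ge0 [_ cvg_pole2]] F.
have N1_near := radius_near_pole a_gt0 (gtr0_norm a_gt0)
  (fun n => (pole1_ge0 n).1) cvg_pole1.
have N2_near : \forall n \near \oo, `|a - N2 n| <= a / 4.
  apply: (radius_near_pole a_gt0 _ (fun n => (pole2_ge0 n).1) cvg_pole2).
  by rewrite normrN gtr0_norm.
pose h n := eucl_dist (pp (N1 n) (V1 n)) (pp (N2 n) (V2 n))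
  - (N1 n + N2 n - a / 4 * F n ^+ 2 + F n ^+ 2 / 8 * (a - N1 n)
     + F n ^+ 2 / 8 * (a - N2 n) - a / 64 * (F n ^+ 2) ^+ 2).
have zero_O : (fun _ => 0 : R) =O_\oo (fun n => F n ^+ 4).
  by apply/eqO_exP; exists 1 => //; apply: nearW => n; rewrite normr0 mul1r.
exists (fun=> 0), (fun=> 0), (fun=> 0), (fun=> 0), (fun=> 0), h.
split => //; last by move=> n; rewrite /h; field.
apply/eqO_exP; exists (1 + a); first by rewrite ltr_wpDr // ltW.
near=> n.
rewrite addr0 [X in _ <= _ * X]ger0_norm ?addr_ge0 ?sqr_ge0 // [2^-1 * _]mulrC.
apply: pp_dist_expansion_error => //.
- by near: n.
- by near: n.
- exact: addr_ge0 (pole1_ge0 n).2 (pole2_ge0 n).2.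
Unshelve. all: end_near. Qed.
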